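(* Let $\Sigma$ be an alphabet with at least three letters and $n\geq 1$. Let $f,g\colon\mathcal{T}(\Sigma)^n\to\mathcal{T}(\Sigma)$ be congruence preserving functions such that $f(a_1,\ldots,a_n)=g(a_1,\ldots,a_n)$ for all $a_1,\ldots,a_n\in\Sigma$. Then $f(t_1,\ldots,t_n)=g(t_1,\ldots,t_n)$ for all $t_1,\ldots,t_n\in\mathcal{T}(\Sigma)$.
   Context: Let $\Sigma$ be an alphabet not containing $0,1$. A binary tree over $\Sigma$ is a finite set $t \subseteq \{0,1\}^*\Sigma$ such that for any $ua, vb \in t$ with $ua \neq vb$, $u$ is not a prefix of $v$ and $v$ is not a prefix of $u$; $\mathcal{T}(\Sigma)$ is the set of such trees, $\mathbf 0=\emptyset$, each letter $a$ is identified with $\{a\}$, and $t\star t' = 0.t\cup 1.t'$. A congruence is an equivalence relation on $\mathcal{T}(\Sigma)$ compatible with $\star$. A function $f\colon\mathcal{T}(\Sigma)^n\to\mathcal{T}(\Sigma)$ is congruence preserving if for every congruence $\sim$ and all $t_i,t_i'$, $t_i\sim t_i'$ for all $i=1,\ldots,n$ implies $f(t_1,\ldots,t_n)\sim f(t_1',\ldots,t_n')$. *)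

From HB Require Import structures.
From mathcomp Require Import all_boot finmap.
Set Implicit Arguments. Unset Strict Implicit. Unset Printing Implicit Defensive.
Local Open Scope fset_scope.

Section Trees.
Variable Sigma : finType.

(* A word u a in {0,1}^* Sigma is encoded as the pair (u, a), with
   0 = false and 1 = true. *)
Definition word := (seq bool * Sigma)%type.

Definition is_tree (t : {fset word}) : bool :=
  [forall x : t, forall y : t,
     (val x != val y) ==> ~~ prefix (val x).1 (val y).1].

Record tree := Tree { tset :> {fset word}; tsetP : is_tree tset }.

HB.instance Definition _ := [isSub for tset].
HB.instance Definition _ := [Equality of tree by <:].

Lemma is_tree0 : is_tree fset0.
Proof. by apply/forallP => -[x Hx]; exfalso; rewrite in_fset0 in Hx. Qed.
Definition tree0 : tree := Tree is_tree0.

Lemma is_tree_letter (a : Sigma) : is_tree [fset ([::], a)].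
Proof.
apply/forallP => -[x Hx]; apply/forallP => -[y Hy] /=.
by move: Hx Hy; rewrite !inE => /eqP-> /eqP->; rewrite eqxx.
Qed.
Definition letter (a : Sigma) : tree := Tree (is_tree_letter a).

Definition pref (b : bool) (t : {fset word}) : {fset word} :=
  [fset (b :: w.1, w.2) | w in t].

Lemma is_tree_star (t t' : tree) : is_tree (pref false t `|` pref true t').
Proof.
apply/forallP => -[x Hx]; apply/forallP => -[y Hy] /=; apply/implyP => nxy.
have key : forall (b : bool) (s : tree) (w w' : word), w \in tset s -> w' \in tset s ->
    (b :: w.1, w.2) != (b :: w'.1, w'.2) -> ~~ prefix (b :: w.1) (b :: w'.1).
  move=> b s w w' Hw Hw' ne; rewrite /= eqxx /=.
  have /forallP/(_ [` Hw])/forallP/(_ [` Hw'])/implyP := tsetP s; apply => /=.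
  by apply: contra ne => /eqP ->.
move: Hx Hy nxy; rewrite !inE => /orP[] /imfsetP[w Hw ->] /orP[] /imfsetP[w' Hw' ->] //=;
  by [apply: key Hw Hw' | apply: key Hw Hw'].
Qed.

Definition star (t t' : tree) : tree := Tree (is_tree_star t t').

Definition congruence (R : tree -> tree -> Prop) : Prop :=
  [/\ (forall t, R t t),
      (forall t t', R t t' -> R t' t),
      (forall t t' t'', R t t' -> R t' t'' -> R t t'') &
      (forall t1 t2 t1' t2', R t1 t1' -> R t2 t2' -> R (star t1 t2) (star t1' t2'))].

Definition congruence_preserving (n : nat) (f : ('I_n -> tree) -> tree) : Prop :=
  forall R, congruence R ->
  forall ts ts' : 'I_n -> tree, (forall i, R (ts i) (ts' i)) -> R (f ts) (f ts').

End Trees.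

From mathcomp Require Import all_boot finmap zify.
Set Implicit Arguments. Unset Strict Implicit. Unset Printing Implicit Defensive.
Local Open Scope fset_scope.

(* A relation F between words that commutes with prefixing induces a congruence: t ~ t'
   iff F maps t and t' onto the same set of words.  Two families are used: merging a
   letter y into a letter x, and grafting a tree t0 below every leaf labelled c.  If the
   letters of t0 lie in L and u, v are related by every merge of two letters of L and by
   every graft of t0 at a letter outside L, then u = v: with three letters, each leaf
   (q, z) of u is fixed either by a merge of two letters of L other than z, or by a graft
   at a fresh letter c, and is thereby transferred to v.
   By congruence preservation, f ts and g ts are related by such a relation as soon as f
   and g agree on arguments modified accordingly.  Merging two letters of the arguments
   lowers the number of letters used, and replacing an argument ts i0 that is not a letter
   by a fresh letter c (so that ts i0 is recovered by grafting it at c) lowers the number of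
   such arguments; induction on these two numbers reduces everything to letters. *)

Section Trees.
Variable Sigma : finType.
Notation word := (word Sigma).
Notation tree := (tree Sigma).
Implicit Types (t u v : tree) (w : word) (a c x y z : Sigma) (r : Sigma -> Sigma).

Lemma tree_prefix_free t w1 w2 :
  w1 \in tset t -> w2 \in tset t -> w1 != w2 -> ~~ prefix w1.1 w2.1.
Proof.
move=> H1 H2; have /forallP/(_ [` H1])/forallP/(_ [` H2])/implyP := tsetP t; exact.
Qed.

Lemma mem_pref b (s : {fset word}) q a :
  ((q, a) \in pref b s) = if q is b' :: q' then (b' == b) && ((q', a) \in s) else false.
Proof.
case: q => [|b' q]; first by apply/imfsetP => -[w _ []].
apply/imfsetP/andP => [[w Hw [-> -> ->]]|[/eqP -> Hq]]; last by exists (q, a).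
by rewrite -surjective_pairing.
Qed.

Lemma mem_star_cons s t b q a :
  ((b :: q, a) \in tset (star s t)) = ((q, a) \in tset (if b then t else s)).
Proof. by rewrite /= in_fsetU !mem_pref; case: b; rewrite /= ?orbF. Qed.

Lemma mem_star_nil s t a : (([::], a) \in tset (star s t)) = false.
Proof. by rewrite /= in_fsetU !mem_pref. Qed.

Lemma congruence_eq : congruence (@eq tree).
Proof. by split=> // [t t' t'' -> -> | t1 t2 t1' t2' -> ->]. Qed.

Lemma congruence_preserving_eqfun n (f : ('I_n -> tree) -> tree) ts ts' :
  congruence_preserving f -> ts =1 ts' -> f ts = f ts'.
Proof. by move=> Hf E; apply: Hf congruence_eq _ _ _. Qed.

Lemma fresh_letter (A : {set Sigma}) : #|A| < #|Sigma| -> exists c, c \notin A.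
Proof.
move=> ltA; have /card_gt0P [c] : 0 < #|~: A| by move: (cardsC A); lia.
by rewrite inE; exists c.
Qed.

Definition prefix_compatible (F : word -> word -> Prop) :=
  forall b p a q c, F (b :: p, a) (q, c) <-> exists2 q', q = b :: q' & F (p, a) (q', c).

Definition rimage (F : word -> word -> Prop) t (w' : word) := exists2 w, w \in tset t & F w w'.

Definition same_image F u v := forall w : word, rimage F u w <-> rimage F v w.

Lemma same_image_sym F u v : same_image F u v -> same_image F v u.
Proof. by move=> H w; split=> /H. Qed.

Section PrefixCompatible.
Variable F : word -> word -> Prop.
Hypothesis F_pc : prefix_compatible F.

Lemma rimage_star s t q c :
  rimage F (star s t) (q, c) <->
  exists b q', q = b :: q' /\ rimage F (if b then t else s) (q', c).
Proof.
split=> [[[[|b p] a]]|[b [q' [-> [[p a] Hw HF]]]]]; first by rewrite mem_star_nil.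
  by rewrite mem_star_cons => Hw /F_pc [q' -> HF]; exists b, q'; split=> //; exists (p, a).
by exists (b :: p, a); [rewrite mem_star_cons | apply/F_pc; exists q'].
Qed.

Lemma same_image_congruence : congruence (same_image F).
Proof.
split=> [t w | t t' /same_image_sym // | t t' t'' H1 H2 w | t1 t2 t1' t2' H1 H2 [q c]].
- by [].
- by split=> [/H1/H2|/H2/H1].
rewrite !rimage_star; split=> -[b [q' [-> H]]]; exists b, q'; split=> //;
  by case: b H => [/H2|/H1].
Qed.

End PrefixCompatible.

Definition relabel_rel r w (w' : word) : Prop := w' = (w.1, r w.2).

Lemma relabel_rel_prefix_compatible r : prefix_compatible (relabel_rel r).
Proof. by move=> b p a q c; split=> [[-> ->]|[q' -> [-> ->]]]; first exists p. Qed.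

Lemma is_tree_relabel r t : is_tree [fset (w.1, r w.2) | w in tset t].
Proof.
apply/forallP => -[w1 H1]; apply/forallP => -[w2 H2] /=; apply/implyP.
case/imfsetP: H1 => w Hw ->; case/imfsetP: H2 => w' Hw' -> ne.
by apply: (tree_prefix_free Hw Hw'); apply: contra ne => /eqP ->.
Qed.

Definition relabel r t : tree := Tree (is_tree_relabel r t).

Lemma same_image_relabel r t :
  idempotent_fun r -> same_image (relabel_rel r) t (relabel r t).
Proof.
move=> r_idem w'; have rr a : r (r a) = r a := r_idem a.
split=> [[w Hw ->]|[_ /imfsetP[w Hw ->] ->]]; last by exists w; rewrite // /relabel_rel /= rr.
by exists (w.1, r w.2); [apply/imfsetP; exists w | rewrite /relabel_rel /= rr].
Qed.

Lemma relabel_transfer r u v q z :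
  same_image (relabel_rel r) u v -> (forall a, (r a == z) = (a == z)) ->
  (q, z) \in tset u -> (q, z) \in tset v.
Proof.
move=> Huv r_z Hu; have rz : r z = z by apply/eqP; rewrite r_z.
have [[p a] Hv [-> /eqP]] : rimage (relabel_rel r) v (q, z).
  by apply/Huv; exists (q, z); rewrite // /relabel_rel /= rz.
by rewrite eq_sym r_z => /eqP <-.
Qed.

Definition merge x y a := if a == y then x else a.

Lemma merge_idem x y : x != y -> idempotent_fun (merge x y).
Proof.
move=> xy a; rewrite /merge /=.
by case: (eqVneq a y) => [_|/negbTE ay] /=; rewrite ?(negbTE xy) ?ay.
Qed.

Lemma merge_eq x y a z : z != x -> z != y -> (merge x y a == z) = (a == z).
Proof.
rewrite /merge => zx zy; case: (eqVneq a y) => [->|//].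
by rewrite eq_sym (negbTE zx) eq_sym (negbTE zy).
Qed.

Lemma card_merge x y (A : {set Sigma}) :
  x \in A -> y \in A -> x != y -> #|merge x y @: A| < #|A|.
Proof.
move=> xA yA xy; apply: (leq_ltn_trans _ (proper_card (properD1 yA))).
apply/subset_leq_card/subsetP => _ /imsetP[a aA ->]; rewrite /merge.
by case: eqP => [_|/eqP ay]; rewrite in_setD1 ?xy ?ay.
Qed.

Definition graft_rel c t0 w (w' : word) : Prop :=
  if w.2 == c then exists2 q', w'.1 = w.1 ++ q' & (q', w'.2) \in tset t0 else w' = w.

Lemma graft_rel_prefix_compatible c t0 : prefix_compatible (graft_rel c t0).
Proof.
move=> b p a q d; rewrite /graft_rel /=; case: (a == c).
  split=> [[q' /= -> H]|[_ -> [q' /= -> H]]]; last by exists q'.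
  by exists (p ++ q') => //; exists q'.
by split=> [[-> ->]|[q' -> [-> ->]]]; first exists p.
Qed.

Lemma same_image_graft c t0 :
  (forall w, w \in tset t0 -> w.2 != c) -> same_image (graft_rel c t0) t0 (letter c).
Proof.
move=> c_fresh w'; rewrite /graft_rel; split=> [[w Hw]|[w]].
  rewrite ifN ?c_fresh // => ->; exists ([::], c); first by rewrite in_fset1.
  by rewrite eqxx; exists w.1; rewrite -?surjective_pairing.
rewrite in_fset1 => /eqP -> /=; rewrite eqxx => -[q' /= Ez Hz].
by exists w'; rewrite ?ifN ?c_fresh // [w']surjective_pairing Ez.
Qed.

Lemma graft_transfer c t0 u v q z :
  same_image (graft_rel c t0) u v -> z != c -> (q, z) \in tset u ->
  (q, z) \in tset v \/
  exists p q', [/\ (p, c) \in tset v, q = p ++ q' & (q', z) \in tset t0].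
Proof.
move=> Huv zc Hu; have [[p a] Hv] : rimage (graft_rel c t0) v (q, z).
  by apply/Huv; exists (q, z); rewrite // /graft_rel /= (negbTE zc).
rewrite /graft_rel /=; case: eqP Hv => [-> Hv [q' -> Hq']|_ Hv [-> ->]]; last by left.
by right; exists p, q'.
Qed.

Section Separation.
Hypothesis Sigma_gt2 : 2 < #|Sigma|.
Variables (L : {set Sigma}) (t0 : tree).
Hypothesis letters_t0 : forall w, w \in tset t0 -> w.2 \in L.

Definition indistinguishable u v :=
  (forall x y, x \in L -> y \in L -> x != y -> same_image (relabel_rel (merge x y)) u v) /\
  (forall c, c \notin L -> same_image (graft_rel c t0) u v).

Lemma indistinguishable_sym u v : indistinguishable u v -> indistinguishable v u.
Proof.
by case=> Hm Hg; split=> [x y xL yL xy | c cL]; apply: same_image_sym; [apply: Hm | apply: Hg].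
Qed.

Lemma indistinguishable_mem_or_graft u v q z :
  indistinguishable u v -> (q, z) \in tset u ->
  (q, z) \in tset v \/
  exists c p q', [/\ c \notin L, (p, c) \in tset v, q = p ++ q' & (q', z) \in tset t0].
Proof.
case=> Hm Hg Hu; case: (ltnP 1 #|L :\ z|) => [/card_gt1P[x [y []]] | L_small].
  rewrite !in_setD1 => /andP[zx xL] /andP[zy yL] xy; left.
  by apply: relabel_transfer (Hm x y xL yL xy) _ Hu => a; rewrite merge_eq // eq_sym.
have [c] : exists c, c \notin z |: L.
  apply: fresh_letter; apply: leq_trans Sigma_gt2.
  by rewrite cardsU1 (cardsD1 z L); case: (z \in L) L_small => /= L_small; lia.
rewrite in_setU1 negb_or => /andP[cz cL].
have zc : z != c by rewrite eq_sym.
have [|[p [q' [Hv -> Ht0]]]] := graft_transfer (Hg c cL) zc Hu; first by left.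
by right; exists c, p, q'.
Qed.

Lemma indistinguishable_mem u v w :
  indistinguishable u v -> w \in tset u -> w \in tset v.
Proof.
move: w => [q z] Huv Hu; have [//|[c [p [q' [cL Hv Eq /letters_t0 /= zL]]]]] :=
  indistinguishable_mem_or_graft Huv Hu.
(* the leaf (p, c) of v lies in u as well, where it is a proper prefix of (q, z) *)
have Hpu : (p, c) \in tset u.
  have [//|[d [_ [_ [_ _ _ /letters_t0 /= cL']]]]] :=
    indistinguishable_mem_or_graft (indistinguishable_sym Huv) Hv.
  by rewrite cL' in cL.
have cz : (p, c) != (q, z) by apply: contraNneq cL => -[_ ->].
by have := tree_prefix_free Hpu Hu cz; rewrite Eq prefix_prefix.
Qed.

Lemma indistinguishable_eq u v : indistinguishable u v -> u = v.
Proof.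
move=> Huv; apply: val_inj; apply/fsetP => w; apply/idP/idP; apply: indistinguishable_mem => //.
exact: indistinguishable_sym.
Qed.

End Separation.

Definition is_leaf t := [exists a, ([::], a) \in tset t].

Lemma is_leafP t : reflect (exists a, t = letter a) (is_leaf t).
Proof.
apply: (iffP existsP) => [[a Ha]|[a ->]]; last by exists a; rewrite in_fset1.
exists a; apply: val_inj; apply/fsetP => w; rewrite in_fset1 /=.
apply/idP/eqP => [Hw|->//]; apply/eqP/contraT; rewrite eq_sym.
by move/(tree_prefix_free Ha Hw); rewrite prefix0s.
Qed.

Lemma is_leaf_relabel r t : is_leaf (relabel r t) = is_leaf t.
Proof.
apply/existsP/existsP => [[_ /imfsetP[[q a] Ha [Eq _]]]|[a Ha]]; first by exists a; rewrite Eq.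
by exists (r a); apply/imfsetP; exists ([::], a).
Qed.

Definition letters n (ts : 'I_n -> tree) : {set Sigma} :=
  [set a | [exists i, [exists w : tset (ts i), (val w).2 == a]]].

Lemma lettersP n (ts : 'I_n -> tree) a :
  reflect (exists i, exists2 w, w \in tset (ts i) & w.2 = a) (a \in letters ts).
Proof.
rewrite inE; apply: (iffP existsP) => [[i /existsP[w /eqP <-]]|[i [w Hw <-]]].
  by exists i, (val w) => //; apply: fsvalP.
by exists i; apply/existsP; exists [` Hw].
Qed.

Lemma letters_relabel n r (ts : 'I_n -> tree) :
  letters (fun i => relabel r (ts i)) = r @: letters ts.
Proof.
apply/setP => a; apply/lettersP/imsetP.
  by case=> i [_ /imfsetP[w Hw ->] <-]; exists w.2 => //; apply/lettersP; exists i, w.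
by case=> _ /lettersP[i [w Hw <-]] ->; exists i, (w.1, r w.2) => //; apply/imfsetP; exists w.
Qed.

Definition inner_args n (ts : 'I_n -> tree) := [set i | ~~ is_leaf (ts i)].

(* lexicographic, since #|letters ts| <= #|Sigma| *)
Definition measure n (ts : 'I_n -> tree) := (#|inner_args ts| * #|Sigma|.+1 + #|letters ts|)%N.

Section Agreement.
Variables (n : nat) (f g : ('I_n -> tree) -> tree).
Hypotheses (f_cp : congruence_preserving f) (g_cp : congruence_preserving g).

Lemma same_image_agree F ts ts' :
  prefix_compatible F -> (forall i, same_image F (ts i) (ts' i)) -> f ts' = g ts' ->
  same_image F (f ts) (g ts).
Proof.
move=> F_pc Hts E; have R_cong := same_image_congruence F_pc.
have [_ Rsym Rtrans _] := R_cong.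
apply: (Rtrans _ (f ts')); first exact: f_cp R_cong _ _ Hts.
by rewrite E; apply: Rsym; exact: g_cp R_cong _ _ Hts.
Qed.

Hypothesis agree_letters :
  forall a : 'I_n -> Sigma, f (fun i => letter (a i)) = g (fun i => letter (a i)).

Lemma agree_leaves ts : inner_args ts = set0 -> f ts = g ts.
Proof.
move=> no_inner; have /fin_all_exists[a Ea] : forall i, exists a, ts i = letter a.
  move=> i; apply/is_leafP/contraT => Hi.
  by have := in_set0 i; rewrite -no_inner inE Hi.
by rewrite (congruence_preserving_eqfun f_cp Ea) (congruence_preserving_eqfun g_cp Ea).
Qed.

Section InductionStep.
Variable ts : 'I_n -> tree.
Hypothesis IH : forall ts', measure ts' < measure ts -> f ts' = g ts'.

Lemma agree_merge x y : x \in letters ts -> y \in letters ts -> x != y ->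
  same_image (relabel_rel (merge x y)) (f ts) (g ts).
Proof.
move=> xL yL xy; pose ts' i := relabel (merge x y) (ts i).
apply: (same_image_agree (ts' := ts')) => [|i|]; first exact: relabel_rel_prefix_compatible.
  exact/same_image_relabel/merge_idem.
apply: IH; rewrite /measure letters_relabel.
have -> : inner_args ts' = inner_args ts by apply/setP => i; rewrite !inE is_leaf_relabel.
by rewrite ltn_add2l card_merge.
Qed.

Lemma agree_graft i0 c : i0 \in inner_args ts -> c \notin letters ts ->
  same_image (graft_rel c (ts i0)) (f ts) (g ts).
Proof.
move=> inner_i0 cL; pose ts' := [eta ts with i0 |-> letter c].
apply: (same_image_agree (ts' := ts')) => [|i|]; first exact: graft_rel_prefix_compatible.
  rewrite /ts' /=; case: eqP => [->|_ w] //.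
  by apply: same_image_graft => w Hw; apply: contraNneq cL => <-; apply/lettersP; exists i0, w.
apply: IH; rewrite /measure.
have -> : inner_args ts' = inner_args ts :\ i0.
  apply/setP => i; rewrite !inE /ts' /=; case: eqP => [_|//].
  by rewrite negbK; apply/is_leafP; exists c.
have := max_card (letters ts'); rewrite (cardsD1 i0 (inner_args ts)) inner_i0; nia.
Qed.

End InductionStep.

Hypothesis Sigma_gt2 : 2 < #|Sigma|.

Lemma agree ts : f ts = g ts.
Proof.
have [m] := ubnP (measure ts); elim: m ts => // m IH ts lt_m.
case: (set_0Vmem (inner_args ts)) => [/agree_leaves //|[i0 inner_i0]].
have IH_ts ts' : measure ts' < measure ts -> f ts' = g ts' by move=> lt'; apply: IH; lia.
apply: (indistinguishable_eq Sigma_gt2 (L := letters ts) (t0 := ts i0)).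
  by move=> w Hw; apply/lettersP; exists i0, w.
by split=> [x y | c]; [apply: agree_merge | apply: agree_graft].
Qed.

End Agreement.
End Trees.

Theorem mainTheorem5 (Sigma : finType) (n : nat) (f g : ('I_n -> tree Sigma) -> tree Sigma) :
  2 < #|Sigma| -> 0 < n ->
  congruence_preserving f -> congruence_preserving g ->
  (forall a : 'I_n -> Sigma, f (fun i => letter (a i)) = g (fun i => letter (a i))) ->
  forall ts : 'I_n -> tree Sigma, f ts = g ts.
Proof.
move=> Sigma_gt2 _ f_cp g_cp agree_letters.
exact: agree f_cp g_cp agree_letters Sigma_gt2.
Qed.
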